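(* Consider integers $0=z_0\le z_1\le\cdots\le z_k\le z_{k+1}=k$ with $z_i\ge i-1$ for all $i\in\{1,\dots,k\}$. Let $\mathbf{a}=(a_1,\dots,a_k)\in\mathbb{N}^k$ with $a_1\cdots a_k$ squarefree. Then $$L^{(k+1)}(\mathbf{a})\le\sum_{\substack{d_j\mid a_j\\1\le j\le k}}\left(\prod_{j=1}^k(z_j-j+1)^{\omega(d_j)}\right)\min\left\{\prod_{j=0}^k\log^{z_{j+1}-z_j}(2a_1\cdots a_j),\ (\log2)^k\prod_{j=1}^k(k-z_j+1)^{\omega(a_j/d_j)}\right\},$$ with the convention $0^0=1$ (and the empty product $a_1\cdots a_0=1$).
   Context: For $\mathbf{a}\in\mathbb{N}^k$, $L^{(k+1)}(\mathbf{a})$ is the $k$-dimensional Lebesgue measure of $\bigcup[\log(d_1/2),\log d_1)\times\cdots\times[\log(d_k/2),\log d_k)$ over all $(d_1,\dots,d_k)\in\mathbb{N}^k$ with $d_1\cdots d_i\mid a_1\cdots a_i$ for $1\le i\le k$. $\omega(n)$ is the number of distinct prime factors of $n$. *)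

From HB Require Import structures.
From mathcomp Require Import all_boot all_order all_algebra.
From mathcomp Require Import all_classical all_reals all_analysis.
Set Implicit Arguments. Unset Strict Implicit. Unset Printing Implicit Defensive.
Import Order.TTheory GRing.Theory Num.Theory.
Local Open Scope classical_set_scope.
Local Open Scope ring_scope.

Definition squarefree (n : nat) : bool :=
  (0 < n)%N && all (fun p => logn p n <= 1)%N (primes n).

Definition omega (n : nat) : nat := size (primes n).

(* Iterated Lebesgue integral over R^n (points as sequences of length n,
   first coordinate integrated outermost).  By Tonelli, for a Borel set A
   of R^n, iter_leb n (indicator of A) is the n-dimensional Lebesgue
   measure of A. *)
Fixpoint iter_leb {R : realType} (n : nat) (f : seq R -> \bar R) : \bar R :=
  match n with
  | 0 => f [::]
  | n'.+1 => (\int[@lebesgue_measure R]_x iter_leb n' (fun t => f (x :: t)))%E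
  end.

Definition Lset {R : realType} (k : nat) (a : 'I_k -> nat) : set (seq R) :=
  [set x | exists d : 'I_k -> nat,
     (forall i : 'I_k, (0 < d i)%N) /\
     (forall i : 'I_k,
        (\prod_(j < k | (j <= i)%N) d j %| \prod_(j < k | (j <= i)%N) a j)%N) /\
     (forall i : 'I_k,
        ln ((d i)%:R / 2) <= nth 0 x i /\ nth 0 x i < ln (d i)%:R)].

Definition Lk {R : realType} (k : nat) (a : 'I_k -> nat) : \bar R :=
  iter_leb k (fun x => ((\1_(@Lset R k a) x : R)%:E)).

Arguments Lset {R} k a.
Arguments Lk {R} k a.

From HB Require Import structures.
From mathcomp Require Import all_boot all_order all_algebra.
From mathcomp Require Import all_classical all_reals all_analysis.
From mathcomp Require Import zify.
Import Order.TTheory GRing.Theory Num.Theory.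
Set Implicit Arguments. Unset Strict Implicit. Unset Printing Implicit Defensive.

(* Let x lie in the union, witnessed by d.  As a_1...a_k is squarefree, each
   prime p of a_j divides at most one d_i; call i = pos p, so that pos p >= j.
   Split a_j = e_j (a_j / e_j) according to whether pos p < z_{j+1}.  Then
   d_i = c_i r_i, where c_i (resp. r_i) is the product of the primes of the
   e_j (resp. a_j / e_j) placed at i, and r_i divides a_1...a_m for the m with
   z_m <= i < z_{m+1}.  Hence x lies both in the coarse box
   prod_i [log (c_i / 2), log (c_i a_1...a_m)), of volume
   prod_m log^(z_{m+1} - z_m) (2 a_1...a_m), and in the fine box
   prod_i [log (d_i / 2), log d_i), of volume (log 2)^k.  Summing, over all
   divisors e_j of a_j and all placements of the primes of e_j in
   [j, z_{j+1}), either the coarse box or the sum of the fine boxes over all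
   placements of the primes of a_j / e_j in [z_{j+1}, k], whichever has the
   smaller volume, gives a step function above the indicator of the union
   whose integral is the right-hand side. *)

Lemma squarefreeP n : reflect (0 < n /\ forall p, logn p n <= 1) (squarefree n).
Proof.
apply: (iffP andP) => -[n0 h]; split => //; last by apply/allP => p _; exact: h.
move=> p; case: (boolP (p \in primes n)) => [/(allP h) //|pn].
by move: pn; rewrite -logn_gt0 lt0n negbK => /eqP->.
Qed.

Lemma squarefree_gt0 n : squarefree n -> 0 < n.
Proof. by case/squarefreeP. Qed.

Lemma squarefree_dvd m n : m %| n -> squarefree n -> squarefree m.
Proof.
move=> mn /squarefreeP[n0 hn]; apply/squarefreeP; split; first exact: dvdn_gt0 n0 mn.
by move=> p; apply: leq_trans (hn p); apply: dvdn_leq_log.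
Qed.

Lemma squarefree_prime_sq n p : squarefree n -> prime p -> ~~ (p * p %| n).
Proof.
move=> /squarefreeP[n0 hn] pp; apply/negP => /(dvdn_leq_log p n0).
by rewrite mulnn pfactorK // => /leq_trans/(_ (hn p)).
Qed.

Lemma prod_primes_squarefree n : squarefree n -> \prod_(p <- primes n) p = n.
Proof.
move=> /squarefreeP[n0 hn]; rewrite [RHS]prod_prime_decomp // prime_decompE big_map /=.
apply: eq_big_seq => p; rewrite -logn_gt0 => lp.
by have := hn p; case: (logn p n) lp => [|[|]] //; rewrite expn1.
Qed.

Lemma prod_primes_part n (pi : nat_pred) :
  squarefree n -> \prod_(p <- primes n | p \in pi) p = n`_pi.
Proof.
move=> sqn; have sqp := squarefree_dvd (dvdn_part pi n) sqn.
by rewrite -big_filter -primes_part prod_primes_squarefree.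
Qed.

Lemma dvdn_prod (I : Type) (r : seq I) (P : pred I) (G H : I -> nat) :
  (forall i, P i -> G i %| H i) ->
  \prod_(i <- r | P i) G i %| \prod_(i <- r | P i) H i.
Proof. by move=> GH; elim/big_ind2: _ => // *; exact: dvdn_mul. Qed.

Lemma dvdn_prod_cond (I : finType) (P : pred I) (F : I -> nat) :
  \prod_(i | P i) F i %| \prod_i F i.
Proof. by rewrite [X in _ %| X](bigID P) /=; exact: dvdn_mulr. Qed.

Lemma partn_prod (I : Type) (r : seq I) (P : pred I) (F : I -> nat) (pi : nat_pred) :
  (forall i, 0 < F i) ->
  (\prod_(i <- r | P i) F i)`_pi = \prod_(i <- r | P i) (F i)`_pi.
Proof.
move=> F0; elim: r => [|i r IH]; first by rewrite !big_nil partn1.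
by rewrite !big_cons; case: (P i); rewrite // partnM ?IH ?prodn_gt0.
Qed.

Lemma squarefree_prod_uniq (I : finType) (P : pred I) (F : I -> nat) p i j :
  squarefree (\prod_(l | P l) F l) -> prime p -> P i -> P j ->
  p %| F i -> p %| F j -> i = j.
Proof.
move=> sq pp Pi Pj pi pj; apply/eqP; apply: contraT => ij.
have /negP[] := squarefree_prime_sq sq pp.
rewrite (bigD1 i) //= (bigD1 j) /=; last by rewrite Pj eq_sym.
by rewrite mulnA dvdn_mulr // dvdn_mul.
Qed.

Lemma dvdn_prod_primes n : \prod_(p <- primes n) p %| n.
Proof.
have [->|n0] := posnP n; first exact: dvdn0.
rewrite [X in _ %| X]prod_prime_decomp // prime_decompE big_map /=.
rewrite big_seq [X in _ %| X]big_seq; apply: dvdn_prod => p; rewrite -logn_gt0 => lp.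
by rewrite -{1}(expn1 p) dvdn_exp2l.
Qed.

Lemma divn_partC pi n : 0 < n -> n %/ n`_pi = n`_pi^'.
Proof. by move=> n0; rewrite -{1}(partnC pi n0) mulKn. Qed.

Section Blocks.
Variables (k : nat) (z : nat -> nat).
Hypothesis z_mono : forall i, i <= k -> z i <= z i.+1.

Lemma z_homo m n : m <= n -> n <= k.+1 -> z m <= z n.
Proof.
elim: n => [|n IH]; first by rewrite leqn0 => /eqP->.
rewrite leq_eqVlt => /orP[/eqP->//|lt] le2.
exact: leq_trans (IH lt (ltnW le2)) (z_mono le2).
Qed.

Definition block_of (i : nat) : nat := \sum_(m < k) (z m.+1 <= i).

Lemma sum_ord_lt n M : M <= n -> \sum_(m < n) (m < M : nat) = M.
Proof.
move=> Mn; rewrite (eq_bigr (fun m : 'I_n => if m < M then 1 else 0)) //.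
by rewrite -big_mkcond (big_ord_narrow Mn) sum1_card card_ord.
Qed.

Lemma block_of_gt j i : j < k -> z j.+1 <= i -> j < block_of i.
Proof.
move=> jk zi; rewrite -[X in X <= _](sum_ord_lt jk) leq_sum // => m _.
have [mj|] := ltnP m j.+1; last by [].
by rewrite (leq_trans (z_homo mj (leqW jk)) zi).
Qed.

Lemma block_of_eq M i : M <= k -> z M <= i < z M.+1 -> block_of i = M.
Proof.
move=> Mk /andP[zMi izM]; rewrite -[RHS](sum_ord_lt Mk); apply: eq_bigr => m _.
congr nat_of_bool; apply/idP/idP => [zmi|mM]; last first.
  by rewrite (leq_trans (z_homo mM _) zMi) // ltnW.
rewrite ltnNge; apply: contraTN zmi => Mm; rewrite -ltnNge.
exact: leq_trans izM (@z_homo M.+1 m.+1 Mm (leqW (ltn_ord m))).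
Qed.

Hypothesis z0 : z 0 = 0.

Lemma prod_block_of (R : comPzSemiRingType) (F : nat -> R) n : n <= k.+1 ->
  (\prod_(0 <= i < z n) F (block_of i) = \prod_(M < n) F M ^+ (z M.+1 - z M))%R.
Proof.
elim: n => [|n IH] nk; first by rewrite z0 big_ord0 big_geq.
rewrite big_ord_recr /= -IH ?(ltnW nk) // (big_cat_nat (n := z n)) ?z_mono //=.
congr (_ * _)%R; rewrite -prodr_const_nat; apply: eq_big_nat => i izn.
by rewrite (block_of_eq _ izn).
Qed.

End Blocks.

Lemma card_ord_range n lo hi : hi <= n -> #|[pred i : 'I_n | lo <= i < hi]| = hi - lo.
Proof.
have sum_range m : \sum_(i < m) (if lo <= i < hi then 1 else 0) = minn hi m - lo.
  elim: m => [|m IH]; first by rewrite big_ord0; lia.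
  by rewrite big_ord_recr /= IH; case: (leqP lo m); case: (ltnP m hi) => /=; lia.
by move=> hin; rewrite -sum1_card big_mkcond /= sum_range; congr (_ - _); apply/minn_idPl.
Qed.

Lemma prod_tag (I : finType) (T_ : I -> finType) (G : I -> nat) :
  \prod_(x : {i : I & T_ i}) G (tag x) = \prod_i G i ^ #|T_ i|.
Proof.
rewrite -(@sig_big_dep _ _ _ I T_ xpredT (fun _ _ => true) (fun i _ => G i)) /=.
by apply: eq_bigr => i _; rewrite prod_nat_const.
Qed.

Lemma big_seq_sub (s : seq nat) (Q : pred nat) (F : nat -> nat) : uniq s ->
  \prod_(y : seq_sub s | Q (ssval y)) F (ssval y) = \prod_(p <- s | Q p) F p.
Proof.
move=> us; transitivity (\prod_(p <- map val (enum {: seq_sub s}) | Q p) F p).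
  by rewrite big_map big_enum_cond.
apply: perm_big; apply: uniq_perm => //.
  by rewrite map_inj_uniq ?enum_uniq //; exact: val_inj.
move=> p; apply/mapP/idP => [[y _ ->]|ps]; first exact: ssvalP.
by exists (SeqSub ps); rewrite ?mem_enum.
Qed.

Section PrimeSlots.
Variable k : nat.
Implicit Type f : 'I_k -> nat.

Definition prime_slot f := {j : 'I_k & seq_sub (primes (f j))}.
Definition mk_slot f j (y : seq_sub (primes (f j))) : prime_slot f :=
  Tagged (fun j => seq_sub (primes (f j))) y.
Definition slot_prime f (x : prime_slot f) : nat := ssval (tagged x).
Definition placed_prod f (s : prime_slot f -> nat) (i : nat) : nat :=
  \prod_(x | s x == i) slot_prime x.

Lemma slot_primeP f (x : prime_slot f) : prime (slot_prime x).
Proof. by have := ssvalP (tagged x); rewrite mem_primes => /andP[]. Qed.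

Lemma placed_prod_gt0 f (s : prime_slot f -> nat) i : 0 < placed_prod s i.
Proof. by apply: prodn_gt0 => x; apply: prime_gt0; exact: slot_primeP. Qed.

Lemma placed_prodE f (s : prime_slot f -> nat) i : placed_prod s i =
  \prod_(j < k) \prod_(y : seq_sub (primes (f j)) | s (mk_slot y) == i) ssval y.
Proof.
rewrite (@sig_big_dep _ _ _ 'I_k (fun j => seq_sub (primes (f j))) xpredT
  (fun j y => s (mk_slot y) == i) (fun j y => ssval y)) /=.
by apply: eq_bigl => -[j y].
Qed.

Lemma placed_prod_comp f (g : nat -> nat) i :
  placed_prod (fun x : prime_slot f => g (slot_prime x)) i =
  \prod_(j < k) \prod_(p <- primes (f j) | g p == i) p.
Proof.
rewrite placed_prodE; apply: eq_bigr => j _.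
exact: (big_seq_sub (fun p => g p == i) id (primes_uniq _)).
Qed.

Lemma placed_prod_dvd f (s : prime_slot f -> nat) (Q : pred 'I_k) i :
  (forall x, s x = i -> Q (tag x)) -> placed_prod s i %| \prod_(j | Q j) f j.
Proof.
move=> sQ; rewrite placed_prodE (bigID Q) /= [X in _ * X]big1 ?muln1; last first.
  by move=> j /negP Qj; apply: big1 => y /eqP/sQ.
apply: dvdn_prod => j _; apply: dvdn_trans (dvdn_prod_cond _ _) _.
rewrite (big_seq_sub xpredT id (primes_uniq _)); exact: dvdn_prod_primes.
Qed.

Definition places f (lo hi : 'I_k -> nat) :=
  family (fun x : prime_slot f => [pred i : 'I_k.+1 | lo (tag x) <= i < hi (tag x)]).

Lemma card_places f (lo hi : 'I_k -> nat) : (forall j, hi j <= k.+1) ->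
  #|places f lo hi| = \prod_(j < k) (hi j - lo j) ^ omega (f j).
Proof.
move=> hik; rewrite card_family foldrE big_map big_enum /=.
rewrite (eq_bigr (fun x => hi (tag x) - lo (tag x))) => [|x _]; last exact: card_ord_range.
rewrite (@prod_tag _ (fun j => seq_sub (primes (f j))) (fun j => hi j - lo j)).
by apply: eq_bigr => j _; rewrite card_seq_sub ?primes_uniq.
Qed.

End PrimeSlots.

Section PrimePosition.
Variables (k : nat) (a d : 'I_k -> nat).
Hypothesis sqA : squarefree (\prod_(j < k) a j).
Hypothesis d_prefix : forall i : 'I_k,
  \prod_(j < k | j <= i) d j %| \prod_(j < k | j <= i) a j.

Local Notation A := (\prod_(j < k) a j).

Lemma a_gt0 j : 0 < a j.
Proof. exact: gt0_prodn (squarefree_gt0 sqA) j isT. Qed.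

Lemma dvdn_prefix_d (i : 'I_k) : \prod_(j < k | j <= i) d j %| A.
Proof. exact: dvdn_trans (d_prefix i) (dvdn_prod_cond _ _). Qed.

Lemma dvdn_d (i : 'I_k) : d i %| A.
Proof. by apply: dvdn_trans (dvdn_prefix_d i); rewrite (bigD1 i) //= dvdn_mulr. Qed.

Lemma d_gt0 i : 0 < d i.
Proof. exact: dvdn_gt0 (squarefree_gt0 sqA) (dvdn_d i). Qed.

Lemma prime_dvdn_d_uniq p (i i' : 'I_k) : prime p -> p %| d i -> p %| d i' -> i = i'.
Proof.
wlog le_ii' : i i' / i <= i'.
  by move=> wl pp; case: (leqP i i') => [|/ltnW] le pi pi'; [|symmetry]; apply: wl.
move=> pp; apply: (squarefree_prod_uniq (P := fun j : 'I_k => j <= i')) => //.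
exact: squarefree_dvd (dvdn_prefix_d i') sqA.
Qed.

(* The index of the unique [d i] divisible by [p], or [k] if there is none. *)
Definition prime_pos (p : nat) : nat :=
  if [pick i : 'I_k | p %| d i] is Some i then val i else k.

Lemma prime_pos_le p : prime_pos p <= k.
Proof. by rewrite /prime_pos; case: pickP => // i _; exact: ltnW (ltn_ord i). Qed.

Lemma prime_posE p (i : 'I_k) : prime p -> p %| d i -> prime_pos p = i.
Proof.
move=> pp pi; rewrite /prime_pos; case: pickP => [i' /= pi'|/(_ i)/=]; last by rewrite pi.
by rewrite (prime_dvdn_d_uniq pp pi' pi).
Qed.

Lemma prime_pos_dvd p (i : 'I_k) : prime_pos p = i -> p %| d i.
Proof.
rewrite /prime_pos; case: pickP => [i' /= pi' /val_inj <- //|_ ki].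
by have := ltn_ord i; rewrite -ki ltnn.
Qed.

Lemma prime_pos_ge p j : prime p -> p %| a j -> j <= prime_pos p.
Proof.
move=> pp pj; have [ltk|] := ltnP (prime_pos p) k; last first.
  by move/(leq_trans (ltn_ord j))/ltnW.
pose i := Ordinal ltk.
have /(dvdn_trans (prime_pos_dvd (erefl : prime_pos p = i))) :
    d i %| \prod_(j < k | j <= i) a j.
  by apply: dvdn_trans (d_prefix i); rewrite (bigD1 i) //= dvdn_mulr.
rewrite Euclid_dvd_prod // big_has_cond => /hasP[j' _ /andP[le pj']].
by rewrite (squarefree_prod_uniq (P := xpredT) sqA pp isT isT pj pj').
Qed.

Lemma d_eq_part (i : 'I_k) : d i = A`_[pred p | prime_pos p == i].
Proof.
have d_pi : [pred p | prime_pos p == i].-nat (d i).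
  apply/andP; split; first exact: d_gt0.
  by apply/allP => p; rewrite mem_primes => /and3P[pp _ pd]; rewrite inE (prime_posE pp pd).
rewrite -{1}(part_pnat_id d_pi).
apply: eq_partn_from_log; [exact: d_gt0|exact: squarefree_gt0|].
move=> p; rewrite inE => /eqP/prime_pos_dvd pd.
have [pp|npp] := boolP (prime p); last by rewrite lognE [RHS]lognE (negbTE npp).
have /squarefreeP[A0 /(_ p) logA] := sqA.
apply/eqP; rewrite eqn_leq dvdn_leq_log ?d_gt0 ?dvdn_d //=.
by apply: leq_trans logA _; rewrite logn_gt0 mem_primes pp d_gt0.
Qed.

Lemma d_eq_prod_parts (e : 'I_k -> nat) (i : 'I_k) : (forall j, e j %| a j) ->
  let rho := [pred p | prime_pos p == i] in
  d i = \prod_(j < k) ((e j)`_rho * (a j %/ e j)`_rho).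
Proof.
move=> ea rho; rewrite d_eq_part partn_prod; last exact: a_gt0.
apply: eq_bigr => j _; have e0 : 0 < e j by apply: dvdn_gt0 (a_gt0 j) (ea j).
rewrite -partnM //; first by rewrite mulnC divnK.
by rewrite divn_gt0 // dvdn_leq // a_gt0.
Qed.

Lemma placed_prod_prime_pos f (h : prime_slot f -> nat) (i : nat) :
  (forall j, squarefree (f j)) -> (forall x, h x = prime_pos (slot_prime x)) ->
  placed_prod h i = \prod_(j < k) (f j)`_[pred p | prime_pos p == i].
Proof.
move=> sqf hE; rewrite (_ : h = fun x => prime_pos (slot_prime x)); last exact: funext.
rewrite placed_prod_comp; apply: eq_bigr => j _.
exact: (prod_primes_part [pred p | prime_pos p == i] (sqf j)).
Qed.

End PrimePosition.

Section StepFunctions.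
Local Open Scope classical_set_scope.
Local Open Scope ring_scope.
Variable R : realType.
Local Notation leb := (@lebesgue_measure R).

Lemma iter_leb_ge0 n (f : seq R -> \bar R) :
  (forall x, (0 <= f x)%E) -> (0 <= iter_leb n f)%E.
Proof.
elim: n f => [|n IH] f f0 /=; first exact: f0.
by apply: integral_ge0 => x _; apply: IH.
Qed.

(* Unlike [ge0_le_integral], no measurability is needed: the integral of a
   nonnegative function is a supremum over the simple functions below it. *)
Lemma le_nonneg_integral (f g : R -> \bar R) :
  (forall x, (0 <= f x)%E) -> (forall x, (f x <= g x)%E) ->
  (\int[leb]_x f x <= \int[leb]_x g x)%E.
Proof.
move=> f0 fg; have g0 x : (0 <= g x)%E by apply: le_trans (fg x).
rewrite !ge0_integralTE //; apply: ereal_sup_le => _ [h hf <-]; exists h => //.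
by move=> x; apply: le_trans (hf x) (fg x).
Qed.

Lemma le_iter_leb n (f g : seq R -> \bar R) :
  (forall x, (0 <= f x)%E) -> (forall x, (f x <= g x)%E) ->
  (iter_leb n f <= iter_leb n g)%E.
Proof.
elim: n f g => [|n IH] f g f0 fg /=; first exact: fg.
by apply: le_nonneg_integral => x; [apply: iter_leb_ge0|apply: IH].
Qed.

Definition itv_ind (l r y : R) : R := \1_([set` `[l, r[%R] : set R) y.

Lemma itv_ind_ge0 l r y : 0 <= itv_ind l r y.
Proof. by rewrite /itv_ind indicE. Qed.

Lemma itv_ind1 l r y : l <= y -> y < r -> itv_ind l r y = 1.
Proof. by move=> ly yr; rewrite /itv_ind indicE mem_set //= in_itv /= ly yr. Qed.

Lemma integral_itv_ind (w l r : R) : 0 <= w -> l <= r ->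
  (\int[leb]_x (w * itv_ind l r x)%:E = (w * (r - l))%:E)%E.
Proof.
move=> w0 lr; under eq_integral do rewrite EFinM.
rewrite ge0_integralZl_EFin //; last 2 first.
- by move=> x _; rewrite lee_fin itv_ind_ge0.
- by apply/measurable_realfun.measurable_EFinP; apply: measurable_realfun.measurable_indic.
rewrite integral_indic // setIT.
have := lebesgue_measure_itv `[l, r[%R; rewrite /= => ->; rewrite lte_fin.
case: (ltP l r) => [_|rl]; first by rewrite -EFinB -EFinM.
by rewrite (_ : r = l) ?subrr ?mulr0 ?mule0 //; apply/le_anti; rewrite rl lr.
Qed.

Lemma iter_leb_boxes n (I : finType) (c : I -> R) (l r : I -> nat -> R) :
  (forall b, 0 <= c b) -> (forall b i, l b i <= r b i) ->
  iter_leb n (fun x =>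
    (\sum_b c b * \prod_(i < n) itv_ind (l b i) (r b i) (nth 0 x i))%:E) =
  (\sum_b c b * \prod_(i < n) (r b i - l b i))%:E.
Proof.
elim: n c l r => [|n IH] c l r c0 lr /=.
  by congr (_%:E); apply: eq_bigr => b _; rewrite !big_ord0.
pose c' b := c b * \prod_(i < n) (r b i.+1 - l b i.+1).
have c'0 b : 0 <= c' b by rewrite mulr_ge0 // prodr_ge0 // => i _; rewrite subr_ge0.
have inner x : iter_leb n (fun t =>
    (\sum_b c b * \prod_(i < n.+1) itv_ind (l b i) (r b i) (nth 0 (x :: t) i))%:E) =
    (\sum_b c' b * itv_ind (l b 0) (r b 0) x)%:E.
  rewrite (eq_bigr (fun b => c b * itv_ind (l b 0) (r b 0) x *
    \prod_(i < n) (r b i.+1 - l b i.+1))); last by move=> b _; rewrite mulrAC.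
  rewrite -(IH (fun b => c b * itv_ind (l b 0) (r b 0) x)
    (fun b i => l b i.+1) (fun b i => r b i.+1)) => [|b|b i]; last 2 first.
  - by rewrite mulr_ge0 ?itv_ind_ge0.
  - exact: lr.
  congr iter_leb; apply: funext => t; congr (_%:E); apply: eq_bigr => b _.
  by rewrite big_ord_recl /= mulrA.
under eq_integral => x _ do rewrite inner -sumEFin.
rewrite (@ge0_integral_sum _ _ _ leb setT measurableT I
  (fun b x => (c' b * itv_ind (l b 0) (r b 0) x)%:E)) => [|b|b x _]; last 2 first.
- apply/measurable_realfun.measurable_EFinP.
  by apply: measurable_realfun.measurable_funM => //; apply: measurable_realfun.measurable_indic.
- by rewrite lee_fin mulr_ge0 ?itv_ind_ge0.
rewrite -sumEFin; apply: eq_bigr => b _; rewrite integral_itv_ind ?lr //.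
by rewrite big_ord_recl /= -mulrA [X in c b * X]mulrC.
Qed.

Definition step_fun n (f : seq R -> R) (v : R) :=
  exists (I : finType) (c : I -> R) (l r : I -> nat -> R),
    [/\ forall b, 0 <= c b, forall b i, l b i <= r b i,
       forall x, f x = \sum_b c b * \prod_(i < n) itv_ind (l b i) (r b i) (nth 0 x i) &
       v = \sum_b c b * \prod_(i < n) (r b i - l b i)].

Lemma step_fun_iter_leb n f v : step_fun n f v -> iter_leb n (fun x => (f x)%:E) = v%:E.
Proof.
move=> [I [c [l [r [c0 lr hf ->]]]]]; rewrite -iter_leb_boxes //.
by congr iter_leb; apply: funext => x; rewrite hf.
Qed.

Lemma step_fun_ge0 n f v : step_fun n f v -> forall x, 0 <= f x.
Proof.
move=> [I [c [l [r [c0 lr hf _]]]]] x; rewrite hf sumr_ge0 // => b _.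
by rewrite mulr_ge0 // prodr_ge0 // => i _; exact: itv_ind_ge0.
Qed.

Lemma step_fun0 n : step_fun n (fun=> 0) 0.
Proof.
exists void, (fun=> 0), (fun _ _ => 0), (fun _ _ => 0).
by split; [case|case|move=> x; rewrite big1 // => -[]|rewrite big1 // => -[]].
Qed.

Lemma step_funD n f g v w :
  step_fun n f v -> step_fun n g w -> step_fun n (fun x => f x + g x) (v + w).
Proof.
move=> [I [c [l [r [c0 lr hf ->]]]]] [J [c' [l' [r' [c0' lr' hg ->]]]]].
exists (I + J)%type, (fun b => match b with inl b => c b | inr b => c' b end),
  (fun b => match b with inl b => l b | inr b => l' b end),
  (fun b => match b with inl b => r b | inr b => r' b end).
by split; [case|case|move=> x; rewrite hf hg big_sumType|rewrite big_sumType].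
Qed.

Lemma step_fun_sum n (J : Type) (s : seq J) (P : pred J) F V :
  (forall j, P j -> step_fun n (F j) (V j)) ->
  step_fun n (fun x => \sum_(j <- s | P j) F j x) (\sum_(j <- s | P j) V j).
Proof.
move=> FV; elim: s => [|j s IH].
  rewrite big_nil (_ : (fun x => _) = fun=> 0); first exact: step_fun0.
  by apply: funext => x; rewrite big_nil.
rewrite big_cons; case Pj: (P j); last first.
  by congr step_fun: IH; apply: funext => x; rewrite big_cons Pj.
by congr step_fun: (step_funD (FV j Pj) IH); apply: funext => x; rewrite big_cons Pj.
Qed.

Lemma step_fun_box n (l r : nat -> R) : (forall i, l i <= r i) ->
  step_fun n (fun x => \prod_(i < n) itv_ind (l i) (r i) (nth 0 x i))
             (\prod_(i < n) (r i - l i)).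
Proof.
move=> lr; exists unit, (fun=> 1), (fun=> l), (fun=> r).
by split => // [x|]; rewrite big_const card_unit /= ?addr0 mul1r.
Qed.

End StepFunctions.

Section LnNat.
Local Open Scope ring_scope.
Context {R : realType}.

Lemma ln_half_le n : (0 < n)%N -> ln (n%:R / 2 : R) <= ln n%:R.
Proof.
move=> n0; have np : (0 : R) < n%:R by rewrite ltr0n.
by rewrite ler_ln ?posrE ?divr_gt0 // ler_pdivrMr // ler_peMr // ?ler1n // ltW.
Qed.

Lemma ln_nat_half n : (0 < n)%N -> ln (n%:R : R) - ln (n%:R / 2) = ln 2.
Proof. by move=> n0; rewrite ln_div ?posrE ?ltr0n // opprB addrC subrK. Qed.

Lemma ler_ln_nat m n : (0 < m)%N -> (m <= n)%N -> ln (m%:R : R) <= ln n%:R.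
Proof.
move=> m0 mn; have n0 := leq_trans m0 mn.
by rewrite ler_ln ?posrE ?ltr0n // ler_nat.
Qed.

Lemma ler_ln_half_nat m n :
  (0 < m)%N -> (m <= n)%N -> ln (m%:R / 2 : R) <= ln (n%:R / 2).
Proof.
move=> m0 mn; have n0 := leq_trans m0 mn.
by rewrite ler_ln ?posrE ?divr_gt0 ?ltr0n // ler_pM2r ?invr_gt0 ?ltr0n // ler_nat.
Qed.

End LnNat.

Section Dominant.
Local Open Scope ring_scope.
Variables (R : realType) (k : nat) (z : nat -> nat) (a : 'I_k -> nat).
Hypothesis z0 : z 0 = 0%N.
Hypothesis z_top : z k.+1 = k.
Hypothesis z_mono : forall i, (i <= k)%N -> (z i <= z i.+1)%N.
Hypothesis z_low : forall i, (1 <= i <= k)%N -> (i - 1 <= z i)%N.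
Hypothesis sqA : squarefree (\prod_(j < k) a j).

Local Notation A := (\prod_(j < k) a j).
Local Notation divisor := {ffun 'I_k -> 'I_A.+1}.

Definition low_part (e : divisor) (j : 'I_k) : nat := e j.
Definition high_part (e : divisor) (j : 'I_k) : nat := a j %/ e j.
Definition prefix_prod (m : nat) : nat := \prod_(j < k | (j < m)%N) a j.

(* A placement puts each prime of [a j] on a coordinate of [R^k]; coordinate
   [k] means that the prime is put nowhere. *)
Definition low_places (e : divisor) :=
  places (low_part e) (fun j => j) (fun j => z j.+1).
Definition high_places (e : divisor) :=
  places (high_part e) (fun j => z j.+1) (fun=> k.+1).

Local Notation low_placement e := {ffun prime_slot (low_part e) -> 'I_k.+1}.
Local Notation high_placement e := {ffun prime_slot (high_part e) -> 'I_k.+1}.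

Definition low_prod e (s : low_placement e) i :=
  placed_prod (fun x => nat_of_ord (s x)) i.
Definition high_prod e (t : high_placement e) i :=
  placed_prod (fun y => nat_of_ord (t y)) i.

Definition coarse_volume : R :=
  \prod_(j < k.+1) ln (2 * (prefix_prod j)%:R) ^+ (z j.+1 - z j).
Definition fine_volume (e : divisor) : R :=
  ln 2 ^+ k * \prod_(j < k) (k%:R - (z j.+1)%:R + 1) ^+ omega (high_part e j).

Definition coarse_box e (s : low_placement e) (x : seq R) : R :=
  \prod_(i < k) itv_ind (ln ((low_prod s i)%:R / 2))
    (ln (low_prod s i * prefix_prod (block_of k z i))%:R) (nth 0 x i).
Definition fine_box e (s : low_placement e) (t : high_placement e) (x : seq R) : R :=
  \prod_(i < k) itv_ind (ln ((low_prod s i * high_prod t i)%:R / 2))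
    (ln (low_prod s i * high_prod t i)%:R) (nth 0 x i).
Definition cover e (s : low_placement e) (x : seq R) : R :=
  if coarse_volume < fine_volume e then coarse_box s x
  else \sum_(t in high_places e) fine_box s t x.
Definition dominant (x : seq R) : R :=
  \sum_(e : divisor | [forall j, (e j %| a j)%N]) \sum_(s in low_places e) cover s x.

Lemma prefix_prod_gt0 m : (0 < prefix_prod m)%N.
Proof. by apply: prodn_gt0 => j; exact: a_gt0. Qed.

Lemma z_le_top j : (j <= k.+1)%N -> (z j <= k.+1)%N.
Proof. by move=> jk; apply: leqW; rewrite -z_top (z_homo z_mono). Qed.

Lemma step_fun_coarse e s : step_fun k (@coarse_box e s) coarse_volume.
Proof.
pose c i := low_prod s i; pose P i := prefix_prod (block_of k z i).
have c0 i : (0 < c i)%N by exact: placed_prod_gt0.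
have P0 i : (0 < P i)%N by exact: prefix_prod_gt0.
suff -> : coarse_volume = \prod_(i < k) (ln (c i * P i)%:R - ln ((c i)%:R / 2)).
  apply: (@step_fun_box _ k (fun i => ln ((c i)%:R / 2)) (fun i => ln (c i * P i)%:R)).
  move=> i; apply: le_trans (ln_half_le (c0 i)) _.
  by rewrite ler_ln ?posrE ?ltr0n ?muln_gt0 ?c0 ?P0 // ler_nat leq_pmulr.
rewrite /coarse_volume.
rewrite -(prod_block_of z_mono z0 (fun m => ln (2 * (prefix_prod m)%:R))) //.
rewrite z_top big_mkord; apply: eq_bigr => i _.
have -> : ((c i * P i)%:R : R) = (c i)%:R / 2 * (2 * (P i)%:R).
  by rewrite natrM mulrA divfK.
by rewrite [in RHS]lnM ?posrE ?divr_gt0 ?mulr_gt0 ?ltr0n ?c0 ?P0 // addrC addKr.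
Qed.

Lemma step_fun_fine e s t : step_fun k (@fine_box e s t) (ln 2 ^+ k).
Proof.
pose n i := (low_prod s i * @high_prod e t i)%N.
have n0 i : (0 < n i)%N by rewrite muln_gt0 !placed_prod_gt0.
have -> : ln (2 : R) ^+ k = \prod_(i < k) (ln (n i)%:R - ln ((n i)%:R / 2)).
  transitivity (\prod_(i < k) ln (2 : R)); first by rewrite prodr_const card_ord.
  by apply: eq_bigr => i _; rewrite ln_nat_half.
apply: (@step_fun_box _ k (fun i => ln ((n i)%:R / 2)) (fun i => ln (n i)%:R)).
by move=> i; exact: ln_half_le.
Qed.

Lemma step_fun_cover e s :
  step_fun k (@cover e s) (Num.min coarse_volume (fine_volume e)).
Proof.
rewrite /cover minElt; case: ifP => _; first exact: step_fun_coarse.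
suff -> : fine_volume e = \sum_(t in high_places e) ln (2 : R) ^+ k.
  by apply: step_fun_sum => t _; exact: step_fun_fine.
rewrite sumr_const card_places // /fine_volume -(mulr_natr (ln 2 ^+ k)) natr_prod.
congr (_ * _); apply: eq_bigr => j _.
by rewrite natrX natrB ?(z_le_top (leqW (ltn_ord j))) // -(addn1 k) natrD addrAC.
Qed.

Lemma low_places_mass (e : divisor) :
  (\prod_(j < k) ((z j.+1)%:R - (j : nat)%:R) ^+ omega (e j)) *
    Num.min coarse_volume (fine_volume e) =
  \sum_(s in low_places e) Num.min coarse_volume (fine_volume e).
Proof.
rewrite sumr_const card_places => [|j]; last exact: z_le_top (leqW (ltn_ord j)).
rewrite -(mulr_natl (Num.min _ _)) natr_prod; congr (_ * _); apply: eq_bigr => j _.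
by rewrite natrX natrB //; have := @z_low j.+1; rewrite ltn_ord subn1 /=; apply.
Qed.

Lemma step_fun_dominant : step_fun k dominant
  (\sum_(e : divisor | [forall j, (e j %| a j)%N])
     (\prod_(j < k) ((z j.+1)%:R - (j : nat)%:R) ^+ omega (e j)) *
     Num.min coarse_volume (fine_volume e)).
Proof.
apply: step_fun_sum => e _; rewrite low_places_mass.
by apply: step_fun_sum => s _; exact: step_fun_cover.
Qed.

Lemma cover_ge0 e s x : 0 <= @cover e s x.
Proof. exact: step_fun_ge0 (step_fun_cover s) x. Qed.

Lemma high_prod_dvd (e : divisor) (t : high_placement e) i :
  (forall j, e j %| a j)%N -> t \in high_places e ->
  (@high_prod e t i %| prefix_prod (block_of k z i))%N.
Proof.
move=> ea /familyP tP.
apply: dvdn_trans (placed_prod_dvd (Q := fun j : 'I_k => (j < block_of k z i)%N) _) _.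
  by move=> y <-; have := tP y; rewrite inE => /andP[zt _]; exact: block_of_gt.
by apply: dvdn_prod => j _; exact: dvdn_div.
Qed.

Lemma cover_ge1 (e : divisor) (s : low_placement e) (t : high_placement e)
    (d : 'I_k -> nat) (x : seq R) :
  (forall j, e j %| a j)%N -> t \in high_places e ->
  (forall i, d i = low_prod s i * @high_prod e t i)%N ->
  (forall i : 'I_k, ln ((d i)%:R / 2) <= nth 0 x i /\ nth 0 x i < ln (d i)%:R) ->
  1 <= cover s x.
Proof.
move=> ea tP dE xd; have c0 i := placed_prod_gt0 (fun x => nat_of_ord (s x)) i.
rewrite /cover; case: ifP => _.
  rewrite /coarse_box big1 // => i _; have [lo hi] := xd i.
  apply: itv_ind1.
    apply: le_trans lo; apply: ler_ln_half_nat; first exact: c0.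
    by rewrite dE leq_pmulr // placed_prod_gt0.
  apply: (lt_le_trans hi); apply: ler_ln_nat; first by rewrite dE muln_gt0 c0 placed_prod_gt0.
  by rewrite dE leq_mul2l dvdn_leq ?prefix_prod_gt0 ?high_prod_dvd ?orbT.
rewrite (bigD1 t) //= -[1]addr0 lerD //.
  by rewrite /fine_box big1 // => i _; rewrite -dE; have [lo hi] := xd i; exact: itv_ind1.
by rewrite sumr_ge0 // => t' _; rewrite prodr_ge0 // => i _; exact: itv_ind_ge0.
Qed.

Lemma placement_witness (d : 'I_k -> nat) :
  (forall i : 'I_k, \prod_(j < k | (j <= i)%N) d j %| \prod_(j < k | (j <= i)%N) a j)%N ->
  exists e : divisor, (forall j, e j %| a j)%N /\
    exists2 s, s \in low_places e &
    exists2 t, t \in high_places e & forall i, d i = (low_prod s i * @high_prod e t i)%N.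
Proof.
move=> d_prefix; pose pos := prime_pos d.
pose pi (j : 'I_k) := [pred p | (pos p < z j.+1)%N].
have a_dvd j : (a j %| A)%N by rewrite (bigD1 j) //= dvdn_mulr.
have sq_part j rho : squarefree (a j)`_rho.
  exact: squarefree_dvd (dvdn_trans (dvdn_part _ _) (a_dvd j)) sqA.
pose e : divisor := [ffun j => inord (a j)`_(pi j)%N].
have eE j : (e j : nat) = ((a j)`_(pi j))%N.
  rewrite ffunE inordK // ltnS dvdn_leq ?squarefree_gt0 //.
  exact: dvdn_trans (dvdn_part _ _) (a_dvd j).
have hE j : high_part e j = ((a j)`_(pi j)^')%N.
  by rewrite /high_part eE divn_partC ?(a_gt0 sqA).
have ea j : (e j %| a j)%N by rewrite eE dvdn_part.
have posE f (x : prime_slot f) :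
    nat_of_ord (inord (pos (slot_prime x)) : 'I_k.+1) = pos (slot_prime x).
  by rewrite inordK // ltnS prime_pos_le.
pose s : low_placement e := [ffun x => inord (pos (slot_prime x))].
pose t : high_placement e := [ffun x => inord (pos (slot_prime x))].
exists e; split => //; exists s.
  apply/familyP => x; rewrite inE ffunE posE.
  have := ssvalP (tagged x); rewrite -/(slot_prime x) /low_part eE primes_part mem_filter.
  case/andP; rewrite !inE => ->; rewrite andbT mem_primes => /and3P[pp _].
  exact: (prime_pos_ge sqA d_prefix pp).
exists t.
  apply/familyP => y; rewrite inE ffunE posE ltnS prime_pos_le andbT.
  have := ssvalP (tagged y); rewrite -/(slot_prime y) hE primes_part mem_filter.
  by case/andP; rewrite !inE -leqNgt.
move=> i; rewrite (d_eq_prod_parts sqA d_prefix (e := low_part e) i ea) big_split /=.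
by rewrite /low_prod /high_prod !(placed_prod_prime_pos (d := d)) // => [j|x|j|x];
  rewrite ?ffunE ?posE /low_part ?eE ?hE.
Qed.

Lemma indicator_le_dominant x : (\1_(Lset k a) x : R) <= dominant x.
Proof.
rewrite indicE; case: (boolP (x \in Lset k a)) => [|_]; last first.
  exact: step_fun_ge0 step_fun_dominant x.
rewrite inE => -[d [_ [d_prefix xd]]].
have [e [ea [s sP [t tP dE]]]] := placement_witness d_prefix.
apply: le_trans (cover_ge1 ea tP dE xd) _.
rewrite /dominant (bigD1 e) /=; last exact/forallP.
rewrite (bigD1 s) //= -addrA lerDl addr_ge0 // sumr_ge0 // => *.
  exact: cover_ge0.
by rewrite sumr_ge0 // => *; exact: cover_ge0.
Qed.

End Dominant.

Theorem lemma2p3 (R : realType) (k : nat) (z : nat -> nat) (a : 'I_k -> nat)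
  (hz0 : z 0%N = 0%N) (hzk : z k.+1 = k)
  (hzmono : forall i : nat, (i <= k)%N -> (z i <= z i.+1)%N)
  (hzlow : forall i : nat, (1 <= i <= k)%N -> (i - 1 <= z i)%N)
  (hsq : squarefree (\prod_(i < k) a i)) :
  (Lk k a <=
   (\sum_(d : {ffun 'I_k -> 'I_(\prod_(i < k) a i).+1} | [forall j, (d j %| a j)%N])
      (\prod_(j < k) ((z j.+1)%:R - (j : nat)%:R : R) ^+ omega (d j)) *
      Num.min
        (\prod_(j < k.+1)
           ln (2 * (\prod_(i < k | (i < j)%N) a i)%:R : R) ^+ (z j.+1 - z j))
        (ln (2 : R) ^+ k *
         \prod_(j < k) ((k%:R - (z j.+1)%:R + 1 : R) ^+ omega (a j %/ d j))))%:E)%E.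
Proof.
apply: (@le_trans _ _ (iter_leb k (fun x => (dominant z a x)%:E))).
  apply: le_iter_leb => x; first by rewrite lee_fin indicE ler0n.
  by rewrite lee_fin; exact: indicator_le_dominant.
by rewrite (step_fun_iter_leb (step_fun_dominant R hz0 hzk hzmono hzlow hsq)).
Qed.
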